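(* Let $m,n,N$ be positive integers and for each $1\le i\le 2m$ let $\mathbf{x}^{(i)}=(\mathbf{x}^{(i)}_1,\dots,\mathbf{x}^{(i)}_n)$ be a sequence of $n$ variables. Then $$\sum_{\substack{\lambda:\ \ell(\lambda)\le n\\ \lambda_1\le N}}s_\lambda(\mathbf{x}^{(1)})s_\lambda(\mathbf{x}^{(2)})\cdots s_\lambda(\mathbf{x}^{(2m)})=\prod_{i=1}^{2m}\frac{1}{V(\mathbf{x}^{(i)})}\cdot\mathrm{Det}^{[2m]}\left(\frac{1-(\mathbf{x}^{(1)}_{i_1}\cdots\mathbf{x}^{(2m)}_{i_{2m}})^{n+N}}{1-\mathbf{x}^{(1)}_{i_1}\cdots\mathbf{x}^{(2m)}_{i_{2m}}}\right)_{1\le i_1,\dots,i_{2m}\le n},$$ the sum being over all partitions $\lambda$ with at most $n$ parts and largest part at most $N$.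
   Context: $V(\mathbf{x})=\prod_{1\le i<j\le n}(\mathbf{x}_i-\mathbf{x}_j)$ is the Vandermonde product; $s_\lambda(\mathbf{x})=\det(\mathbf{x}_i^{\lambda_j+n-j})_{1\le i,j\le n}/V(\mathbf{x})$ is the Schur polynomial in $n$ variables. Each entry $\frac{1-y^{n+N}}{1-y}$ means the polynomial $\sum_{k=0}^{n+N-1}y^k$. Hyperdeterminant: $\mathrm{Det}^{[2m]}(A):=\frac{1}{n!}\sum_{\sigma_1,\dots,\sigma_{2m}\in\mathfrak{S}_n}\mathrm{sgn}(\sigma_1)\cdots\mathrm{sgn}(\sigma_{2m})\prod_{i=1}^nA(\sigma_1(i),\dots,\sigma_{2m}(i))$. *)

From HB Require Import structures.
From mathcomp Require Import all_boot all_order all_algebra all_fingroup.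
Set Implicit Arguments. Unset Strict Implicit. Unset Printing Implicit Defensive.
Import GRing.Theory.
Local Open Scope ring_scope.

Definition vandermonde (F : fieldType) (n : nat) (x : 'I_n -> F) : F :=
  \prod_(i < n) \prod_(j < n | (i < j)%N) (x i - x j).

(* A partition with at most n parts and largest part at most N is encoded as a
   nonincreasing function lam : 'I_n -> 'I_N.+1 (parts lam_0 >= ... >= lam_{n-1},
   zero parts allowed). *)
Definition is_partition (n N : nat) (lam : {ffun 'I_n -> 'I_N.+1}) : bool :=
  [forall i : 'I_n, forall j : 'I_n, (i <= j)%N ==> (lam j <= lam i)%N].

(* Schur polynomial (evaluated): det (x_i^(lam_j + n - j)) / V(x), with the
   1-based exponent lam_j + n - j written 0-based as lam_j + (n - 1 - j). *)
Definition schur (F : fieldType) (n N : nat) (lam : {ffun 'I_n -> 'I_N.+1})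
    (x : 'I_n -> F) : F :=
  \det (\matrix_(i < n, j < n) x i ^+ (lam j + (n - 1 - j))%N) / vandermonde x.

Definition hyperdet (F : fieldType) (m n : nat) (A : ('I_(2 * m) -> 'I_n) -> F) : F :=
  (n`!%:R)^-1 *
  \sum_(s : {ffun 'I_(2 * m) -> 'S_n})
     (\prod_(k < 2 * m) (-1) ^+ (s k : bool)) *
     \prod_(i < n) A (fun k => s k i).

From HB Require Import structures.
From mathcomp Require Import all_boot all_order all_algebra all_fingroup.
From mathcomp Require Import zify.
Set Implicit Arguments. Unset Strict Implicit. Unset Printing Implicit Defensive.
Import GRing.Theory.
Local Open Scope ring_scope.

(* Writing s_lam(y) = det(y_a^(mu_i)) / V(y) with mu_i = lam_i + n - 1 - i turns
   partitions into strictly decreasing exponent sequences mu < n + N.  Expanding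
   the geometric sums multilinearly gives
   Det^[2m] = 1/n! * sum over all k : [n] -> [n + N] of prod_l det(x_l,a^(k_i)).
   A term vanishes unless k is injective, and sorting k by a permutation t
   multiplies each of the 2m alternants by sgn t, so leaves the product
   unchanged; hence that sum is n! times the sum over decreasing k. *)

Lemma card_ord_ltn n t : (t <= n)%N -> #|[pred a : 'I_n | (a < t)%N]| = t.
Proof.
move=> le_tn; rewrite -sum1_card.
rewrite (eq_bigl (fun a : 'I_n => true && (a < t)%N)) //.
by rewrite (big_ord_narrow_cond le_tn) sum1_card card_ord.
Qed.

Section Rank.
Variable n : nat.
Implicit Types (k : 'I_n -> nat).

Definition before k (a b : 'I_n) := (k b < k a)%N || ((k a == k b) && (a < b)%N).

Lemma before_irr k a : before k a a = false.
Proof. by rewrite /before ltnn eqxx ltnn. Qed.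

Lemma before_trans k a b c : before k a b -> before k b c -> before k a c.
Proof.
rewrite /before => /orP[h1|/andP[/eqP e1 h1]] /orP[h2|/andP[/eqP e2 h2]]; apply/orP.
- left; lia.
- left; lia.
- left; lia.
- right; apply/andP; split; [apply/eqP; lia | lia].
Qed.

Lemma before_total k a b : a != b -> before k a b || before k b a.
Proof.
rewrite /before => neq_ab.
have [|_|_] := ltngtP (k a) (k b); rewrite ?orbT //=.
have [|_|] := ltngtP a b; rewrite ?orbT // => eq_ab.
by rewrite (val_inj eq_ab) eqxx in neq_ab.
Qed.

Definition rank k (i : 'I_n) := #|[pred a | before k a i]|.

Lemma rank_ltn k i : (rank k i < n)%N.
Proof.
rewrite /rank -[X in (_ < X)%N]card_ord -(cardC [pred a | before k a i]).
rewrite -[X in (X < _)%N]addn0 ltn_add2l.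
by apply/card_gt0P; exists i; rewrite !inE /= before_irr.
Qed.

Lemma rank_before k a b : before k a b -> (rank k a < rank k b)%N.
Proof.
move=> ab; apply: proper_card; apply/properP; split.
- by apply/subsetP => c; rewrite !inE => ca; apply: before_trans ca ab.
- by exists a; rewrite !inE // before_irr.
Qed.

Lemma rank_inj k : injective (fun i => Ordinal (rank_ltn k i)).
Proof.
move=> a b /(congr1 val) /= e; apply/eqP; apply/negPn/negP => neq_ab.
by case/orP: (before_total k neq_ab) => /rank_before; rewrite e ltnn.
Qed.

Definition rank_perm k : 'S_n := perm (@rank_inj k).

Lemma rank_permE k i : val (rank_perm k i) = rank k i.
Proof. by rewrite permE. Qed.
End Rank.

Section Decreasing.
Variables n p : nat.
Implicit Types (mu ka : {ffun 'I_n -> 'I_p}).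

Definition decreasing mu :=
  [forall i : 'I_n, forall j : 'I_n, (i < j)%N ==> (mu j < mu i)%N].

Definition key ka (i : 'I_n) : nat := ka i.

Lemma decreasingP mu :
  reflect (forall i j : 'I_n, (i < j)%N -> (mu j < mu i)%N) (decreasing mu).
Proof.
apply: (iffP forallP) => [dec i j|dec i]; first by move: (dec i) => /forallP/(_ j)/implyP.
by apply/forallP => j; apply/implyP; apply: dec.
Qed.

Lemma decreasing_ltn mu : decreasing mu -> forall i j : 'I_n, (mu j < mu i)%N = (i < j)%N.
Proof.
move=> /decreasingP dec i j; have [ij|ji|/val_inj ->] := ltngtP i j.
- exact: dec.
- by apply/negbTE; rewrite -leqNgt ltnW // dec.
- by rewrite ltnn.
Qed.

Lemma decreasing_inj mu : decreasing mu -> injective mu.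
Proof.
move=> dec i j eq_ij; have [lt_ij|lt_ji|/val_inj //] := ltngtP i j.
- by move: lt_ij; rewrite -(decreasing_ltn dec) eq_ij ltnn.
- by move: lt_ji; rewrite -(decreasing_ltn dec) eq_ij ltnn.
Qed.

Lemma decreasing_gap mu (i j : 'I_n) :
  decreasing mu -> (i <= j)%N -> (mu j + (j - i) <= mu i)%N.
Proof.
move=> /decreasingP dec le_ij.
suff gap d (k : 'I_n) : k = (i + d)%N :> nat -> (mu k + d <= mu i)%N.
  by apply: gap; rewrite subnKC.
elim: d k => [|d IH] k ek; first by rewrite addn0 (val_inj (etrans ek (addn0 i))).
have lt_id : (i + d < n)%N by have := ltn_ord k; lia.
have lt_k : (Ordinal lt_id < k)%N by rewrite /= ek addnS.
by have := IH (Ordinal lt_id) erefl; have := dec _ _ lt_k; lia.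
Qed.

Lemma rank_perm_decreasing ka mu (t : 'S_n) :
  decreasing mu -> (forall i, ka i = mu (t i)) -> rank_perm (key ka) = t.
Proof.
move=> dec ka_mut; apply/permP => i; apply: val_inj; rewrite rank_permE /rank.
have -> : #|[pred a | before (key ka) a i]| = #|t @^-1: [set b : 'I_n | (b < t i)%N]|.
  apply: eq_card => a; rewrite !inE /before /key !ka_mut decreasing_ltn //.
  case: ltnP => //= _; apply/negbTE/andP => -[/eqP eq_ai lt_ai].
  have eq_ta : t a = t i by apply: (decreasing_inj dec); apply: val_inj.
  by move: lt_ai; rewrite (perm_inj eq_ta) ltnn.
by rewrite card_preimset; [rewrite cardsE card_ord_ltn // ltnW | apply: perm_inj].
Qed.

Definition sort_ffun ka := [ffun a => ka ((rank_perm (key ka))^-1%g a)].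

Lemma sort_ffun_decreasing ka : injective ka -> decreasing (sort_ffun ka).
Proof.
move=> inj_ka; apply/decreasingP => a b lt_ab; rewrite !ffunE.
set i := (rank_perm (key ka))^-1%g a; set j := (rank_perm (key ka))^-1%g b.
have ri : rank (key ka) i = a by rewrite -rank_permE permKV.
have rj : rank (key ka) j = b by rewrite -rank_permE permKV.
have neq_ij : i != j by apply: contraTneq lt_ab => eq_ij; rewrite -ri -rj eq_ij ltnn.
case/orP: (before_total (key ka) neq_ij) => /[dup] ij /rank_before; rewrite ri rj.
- move: ij; rewrite /before /key => /orP[//|/andP[/eqP eq_ij _]] _.
  by rewrite (inj_ka _ _ (val_inj eq_ij)) eqxx in neq_ij.
- by move=> lt_ba; have := ltn_trans lt_ab lt_ba; rewrite ltnn.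
Qed.

Lemma sum_ffun_decreasing (R : nmodType) (G : {ffun 'I_n -> 'I_p} -> R) :
  (forall ka, ~~ injectiveb ka -> G ka = 0) ->
  (forall mu (t : 'S_n), G [ffun i => mu (t i)] = G mu) ->
  \sum_ka G ka = (\sum_(mu | decreasing mu) G mu) *+ n`!.
Proof.
move=> G_noninj G_perm.
rewrite (bigID (fun ka => injectiveb ka)) /= [X in _ + X]big1 ?addr0 //.
pose compose (tmu : 'S_n * {ffun 'I_n -> 'I_p}) := [ffun i => tmu.2 (tmu.1 i)].
pose factor ka := (rank_perm (key ka), sort_ffun ka).
rewrite (reindex_onto compose factor); last first.
  by move=> ka _; apply/ffunP => i; rewrite !ffunE permK.
rewrite (eq_bigl (fun tmu => true && decreasing tmu.2)); last first.
  move=> [t mu] /=; apply/idP/idP => [/andP[/injectiveP inj /eqP eq_tmu]|dec].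
    by rewrite -[mu]/((t, mu).2) -eq_tmu; apply: sort_ffun_decreasing.
  have inj : injective (compose (t, mu)).
    by move=> a b; rewrite !ffunE /= => /(decreasing_inj dec)/perm_inj.
  have -> : injectiveb (compose (t, mu)) by apply/injectiveP.
  rewrite /factor /sort_ffun (@rank_perm_decreasing _ mu t) //.
    by apply/eqP; congr (_, _); apply/ffunP => a; rewrite !ffunE permKV.
  by move=> i; rewrite ffunE.
rewrite (eq_bigr (fun tmu => G tmu.2)); last by move=> [t mu] _; apply: G_perm.
rewrite -(pair_big_dep xpredT (fun _ mu => decreasing mu) (fun _ mu => G mu)) /=.
by rewrite sumr_const card_Sn.
Qed.
End Decreasing.

Definition alternant (R : comPzRingType) n (y : 'I_n -> R) (k : 'I_n -> nat) : 'M[R]_n :=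
  \matrix_(i, a) y a ^+ k i.

Section Alternant.
Variables (R : comNzRingType) (n : nat).
Implicit Types (y : 'I_n -> R) (k : 'I_n -> nat).

Lemma det_alternant_eq0 y k i j : i != j -> k i = k j -> \det (alternant y k) = 0.
Proof. by move=> neq_ij eq_k; apply: (determinant_alternate neq_ij) => a; rewrite !mxE eq_k. Qed.

Lemma det_alternant_perm y k k' (t : 'S_n) : (forall i, k' i = k (t i)) ->
  \det (alternant y k') = (-1) ^+ t * \det (alternant y k).
Proof.
move=> k'E; have -> : alternant y k' = row_perm t (alternant y k).
  by apply/matrixP => i a; rewrite !mxE k'E.
by rewrite row_permE det_mulmx det_perm.
Qed.
End Alternant.

Lemma hyperdet_geometric (F : fieldType) m n p (x : 'I_(2 * m) -> 'I_n -> F) :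
  hyperdet (fun idx : 'I_(2 * m) -> 'I_n =>
      \sum_(k < p) (\prod_(l < 2 * m) x l (idx l)) ^+ k)
  = (n`!%:R)^-1 * \sum_(ka : {ffun 'I_n -> 'I_p})
       \prod_(l < 2 * m) \det (alternant (x l) (key ka)).
Proof.
rewrite /hyperdet; congr (_ * _).
transitivity (\sum_(s : {ffun 'I_(2 * m) -> 'S_n}) \sum_(ka : {ffun 'I_n -> 'I_p})
   (\prod_(l < 2 * m) (-1) ^+ (s l : bool)) *
   \prod_(l < 2 * m) \prod_(i < n) x l (s l i) ^+ ka i).
  apply: eq_bigr => s _; rewrite bigA_distr_bigA mulr_sumr; apply: eq_bigr => ka _.
  by congr (_ * _); rewrite exchange_big /=; apply: eq_bigr => i _; rewrite prodrXl.
rewrite exchange_big /=; apply: eq_bigr => ka _.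
rewrite /determinant bigA_distr_bigA /=; apply: eq_bigr => s _.
rewrite big_split /=; congr (_ * _); apply: eq_bigr => l _.
by apply: eq_bigr => i _; rewrite mxE.
Qed.

Section ShiftedPartitions.
Variables n N : nat.

Definition shift (lam : {ffun 'I_n -> 'I_N.+1}) (j : 'I_n) : nat := (lam j + (n - 1 - j))%N.

Lemma shift_ltn lam j : (shift lam j < n + N)%N.
Proof. by rewrite /shift; have := ltn_ord (lam j); have := ltn_ord j; lia. Qed.

Definition shift_ffun lam : {ffun 'I_n -> 'I_(n + N)} :=
  [ffun j => Ordinal (shift_ltn lam j)].

Definition unshift (mu : {ffun 'I_n -> 'I_(n + N)}) : {ffun 'I_n -> 'I_N.+1} :=
  [ffun j => inord (mu j - (n - 1 - j))].

Lemma unshiftK : cancel shift_ffun unshift.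
Proof.
by move=> lam; apply/ffunP => j; rewrite !ffunE /= /shift addnK inord_val.
Qed.

Lemma shift_decreasing lam : is_partition lam -> decreasing (shift_ffun lam).
Proof.
move=> /forallP part; apply/decreasingP => i j lt_ij; rewrite !ffunE /= /shift.
have := part i => /forallP /(_ j) /implyP /(_ (ltnW lt_ij)).
by have := ltn_ord j; lia.
Qed.

Hypothesis n_gt0 : (0 < n)%N.

Lemma decreasing_bounds (mu : {ffun 'I_n -> 'I_(n + N)}) : decreasing mu ->
  forall j : 'I_n, (n - 1 - j <= mu j)%N /\ (mu j - (n - 1 - j) <= N)%N.
Proof.
move=> dec j.
have lt_last : (n - 1 < n)%N by lia.
have le_last : (j <= Ordinal lt_last)%N by rewrite /= -ltnS subn1 prednK // ltn_ord.
have := decreasing_gap dec le_last.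
have := decreasing_gap (i := Ordinal n_gt0) dec (leq0n j).
have := ltn_ord (mu (Ordinal n_gt0)); rewrite /=; lia.
Qed.

Lemma unshift_partition (mu : {ffun 'I_n -> 'I_(n + N)}) :
  is_partition (unshift mu) && (shift_ffun (unshift mu) == mu) = decreasing mu.
Proof.
apply/idP/idP => [/andP[part /eqP <-]|dec]; first exact: shift_decreasing.
apply/andP; split.
- apply/forallP => i; apply/forallP => j; apply/implyP => le_ij; rewrite !ffunE.
  have [? ?] := decreasing_bounds dec i; have [? ?] := decreasing_bounds dec j.
  by rewrite !inordK; [have := decreasing_gap dec le_ij; lia | lia | lia].
- apply/eqP/ffunP => j; apply: val_inj; rewrite !ffunE /= /shift ffunE.
  by have [? ?] := decreasing_bounds dec j; rewrite inordK; lia.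
Qed.

Lemma sum_partition_shift (R : nmodType) (f : {ffun 'I_n -> 'I_(n + N)} -> R) :
  \sum_(lam : {ffun 'I_n -> 'I_N.+1} | is_partition lam) f (shift_ffun lam)
  = \sum_(mu : {ffun 'I_n -> 'I_(n + N)} | decreasing mu) f mu.
Proof.
rewrite (reindex_onto unshift shift_ffun) => [|lam _]; last exact: unshiftK.
by apply: eq_big => [mu|mu /andP[_ /eqP ->]]; first exact: unshift_partition.
Qed.
End ShiftedPartitions.

Lemma schur_alternant (F : fieldType) n N (lam : {ffun 'I_n -> 'I_N.+1}) (y : 'I_n -> F) :
  schur lam y = \det (alternant y (key (shift_ffun lam))) / vandermonde y.
Proof.
by rewrite /schur -det_tr; congr (\det _ / _); apply/matrixP => i j; rewrite !mxE /key ffunE.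
Qed.

Unset Implicit Arguments.
Theorem theorem3p1 (F : fieldType) (hchar : [pchar F] =i pred0)
    (m n N : nat) (hm : (0 < m)%N) (hn : (0 < n)%N) (hN : (0 < N)%N)
    (x : 'I_(2 * m) -> 'I_n -> F)
    (hV : forall l : 'I_(2 * m), vandermonde (x l) != 0) :
  \sum_(lam : {ffun 'I_n -> 'I_N.+1} | is_partition lam)
      \prod_(l < 2 * m) schur lam (x l)
  = (\prod_(l < 2 * m) (vandermonde (x l))^-1) *
    hyperdet (fun idx : 'I_(2 * m) -> 'I_n =>
      \sum_(k < n + N) (\prod_(l < 2 * m) x l (idx l)) ^+ k).
Proof.
pose G (ka : {ffun 'I_n -> 'I_(n + N)}) := \prod_(l < 2 * m) \det (alternant (x l) (key ka)).
have G_noninj (ka : {ffun 'I_n -> 'I_(n + N)}) : ~~ injectiveb ka -> G ka = 0.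
  case/injectivePn => i [j neq_ij eq_ij].
  have l0 : 'I_(2 * m) by exists 0%N; rewrite muln_gt0.
  by rewrite /G (bigD1 l0) //= (det_alternant_eq0 _ neq_ij) ?mul0r // /key eq_ij.
have G_perm (mu : {ffun 'I_n -> 'I_(n + N)}) (t : 'S_n) : G [ffun i => mu (t i)] = G mu.
  rewrite /G (eq_bigr (fun l => (-1) ^+ t * \det (alternant (x l) (key mu)))).
    by rewrite big_split /= prodr_const card_ord exprM sqrr_sign expr1n mul1r.
  by move=> l _; apply: det_alternant_perm => i; rewrite /key ffunE.
have nfact_neq0 : (n`!%:R : F) != 0 by rewrite ((pcharf0P F).1 hchar) -lt0n fact_gt0.
have -> : \sum_(lam : {ffun 'I_n -> 'I_N.+1} | is_partition lam) \prod_(l < 2 * m) schur lam (x l)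
    = (\prod_(l < 2 * m) (vandermonde (x l))^-1) *
      \sum_(lam : {ffun 'I_n -> 'I_N.+1} | is_partition lam) G (shift_ffun lam).
  rewrite mulr_sumr; apply: eq_bigr => lam _.
  by rewrite -big_split /=; apply: eq_bigr => l _; rewrite schur_alternant mulrC.
rewrite hyperdet_geometric (sum_ffun_decreasing G_noninj G_perm) sum_partition_shift //.
by rewrite -(mulr_natl (\sum_(mu | decreasing mu) G mu)) mulKf.
Qed.
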